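(* For $n\ge0$ and $0\le x<s^n$ with base-$s$ expansion $x=x_0+x_1s+\dots+x_{n-1}s^{n-1}$ ($0\le x_k<s$) put $S_{(n,x)}=S_{x_0}S_{x_1}\cdots S_{x_{n-1}}$ and $u_{(n,x)}=u_{x_0}u_{x_1}\cdots u_{x_{n-1}}$ (empty products equal $I$). Then for all $n,m\ge0$, $0\le x<s^n$, $0\le y<s^m$: if $x=\varphi(j,x')$ and $y=\varphi(l,y')$ for some $(j,x'),(l,y')\in\mathcal V$, then $$T_S(u_{(n,x)}u_{(m,y)}^* )=S_{(n,x)}S_{(m,y)}^*+C_{(n,x),(m,y)},$$ where $C_{(n,x),(m,y)}$ is the rank-one operator with $C_{(n,x),(m,y)}E_{(k,z)}=E_{(j,x')}$ if $(k,z)=(l,y')$ and $C_{(n,x),(m,y)}E_{(k,z)}=0$ otherwise; and if $x$ or $y$ is not in the range of $\varphi$, then $T_S(u_{(n,x)}u_{(m,y)}^* )=S_{(n,x)}S_{(m,y)}^*$.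
   Context: Fix an integer $s\ge2$. Let $\mathcal V=\{(n,x): n\in\mathbb Z_{\ge0},\ x\in\mathbb Z,\ 0\le x<s^n\}$, $H=\ell^2(\mathcal V)$ with orthonormal basis $\{E_{(n,x)}\}$. $S_j$ ($0\le j\le s-1$) are the isometries on $H$ given by $S_jE_{(n,x)}=E_{(n+1,sx+j)}$. On $\ell^2(\mathbb Z)$ with standard basis $\{e_l\}_{l\in\mathbb Z}$, define isometries $u_je_l=e_{sl+j}$, $j=0,\dots,s-1$ (these satisfy the Cuntz relations $u_j^*u_k=\delta_{jk}$, $\sum_ju_ju_j^*=I$). Let $\varphi:\mathcal V\to\mathbb Z$, $\varphi(n,x)=s^n+x$ (injective), let $\iota:H\to\ell^2(\mathbb Z)$ be the isometry $\iota E_{(n,x)}=e_{\varphi(n,x)}$, and define $T_S:B(\ell^2(\mathbb Z))\to B(H)$ by $T_S(a)=\iota^*a\iota$. *)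

From mathcomp Require Import all_boot all_order all_algebra.
Set Implicit Arguments. Unset Strict Implicit. Unset Printing Implicit Defensive.
Import GRing.Theory Num.Theory.
Local Open Scope ring_scope.

(* Vectors of H = l^2(V) are modelled as coefficient functions on nat*nat
   (index (n,x)); vectors of l^2(Z) as coefficient functions on int.
   Operators are given by their (row- and column-finite) matrix action on
   coefficient functions; an operator identity is checked on the orthonormal
   basis. *)
Section Defs.
Variables (R : nzRingType) (s : nat).

Definition Hvec := nat * nat -> R.
Definition Lvec := int -> R.

Definition inV (p : nat * nat) : bool := (p.2 < s ^ p.1)%N.

Definition EH (w : nat * nat) : Hvec := fun p => if p == w then 1 else 0.
Definition eZ (l : int) : Lvec := fun l' => if l' == l then 1 else 0.

Definition phi (p : nat * nat) : int := ((s ^ p.1)%N + p.2)%N%:Z.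

(* u_j e_l = e_{s l + j}, and its adjoint u_j^* e_{s l + j} = e_l *)
Definition u (j : nat) (f : Lvec) : Lvec :=
  fun l => if (s%:Z %| l - j%:Z)%Z then f ((l - j%:Z) %/ s%:Z)%Z else 0.
Definition u_adj (j : nat) (f : Lvec) : Lvec :=
  fun k => f (s%:Z * k + j%:Z).

(* S_j E_(n,x) = E_(n+1, s x + j), and its adjoint *)
Definition S (j : nat) (f : Hvec) : Hvec :=
  fun p => if (0 < p.1)%N && (p.2 %% s == j)%N then f (p.1.-1, p.2 %/ s)%N else 0.
Definition S_adj (j : nat) (f : Hvec) : Hvec :=
  fun p => f (p.1.+1, s * p.2 + j)%N.

(* iota E_(n,x) = e_{phi(n,x)}; iota^* e_{phi v} = E_v, iota^* e_l = 0 off range *)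
Definition iota_adj (g : Lvec) : Hvec := fun p => if inV p then g (phi p) else 0.

(* T_S(a) E_w = iota^* a iota E_w = iota^* (a e_{phi w}) *)
Definition TS_basis (a : Lvec -> Lvec) (w : nat * nat) : Hvec :=
  iota_adj (a (eZ (phi w))).

Definition digit (x k : nat) : nat := (x %/ s ^ k %% s)%N.

Definition uw (n x : nat) : Lvec -> Lvec :=
  foldr (fun k g => u (digit x k) \o g) id (iota 0 n).
Definition uw_adj (n x : nat) : Lvec -> Lvec :=
  foldr (fun k g => g \o u_adj (digit x k)) id (iota 0 n).
Definition Sw (n x : nat) : Hvec -> Hvec :=
  foldr (fun k g => S (digit x k) \o g) id (iota 0 n).
Definition Sw_adj (n x : nat) : Hvec -> Hvec :=
  foldr (fun k g => g \o S_adj (digit x k)) id (iota 0 n).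

Definition Crank1 (jx ly : nat * nat) (f : Hvec) : Hvec :=
  fun p => if p == jx then f ly else 0.

End Defs.

From mathcomp Require Import all_boot all_order all_algebra.
From mathcomp Require Import zify ring.
From Stdlib Require Import FunctionalExtensionality.

(* The embedding iota intertwines the two families of words: since
   phi (k + n, s^n z + x) = s^n phi (k, z) + x, we have u_(n,x) iota = iota S_(n,x).
   Now u_(m,y)^* e_(phi w) is e_q when phi w = s^m q + y and 0 otherwise.  If q > 0,
   then w is the word (m,y) followed by some v with phi v = q, and both sides
   equal E of the word (n,x) followed by v.  The only defect is q = 0, i.e.
   phi w = y: then u_(n,x) e_0 = e_x, which iota^* sends to E_v if x = phi v and
   to 0 if x is not in the range of phi; this is the rank-one correction. *)

Set Implicit Arguments.
Unset Strict Implicit.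
Unset Printing Implicit Defensive.

Import Order.TTheory GRing.Theory Num.Theory.
Local Open Scope ring_scope.

Lemma eqn_divmod (d q r N : nat) : (r < d)%N ->
  ((q * d + r == N) = (N %% d == r) && (q == N %/ d))%N.
Proof.
move=> rd; have d_gt0 : (0 < d)%N by apply: leq_ltn_trans rd.
apply/eqP/andP => [<- | [/eqP <- /eqP ->]]; last by rewrite -divn_eq.
by rewrite modnMDl modn_small // divnMDl // divn_small // addn0.
Qed.

Lemma eqz_divmod (d : nat) (q r N : int) : 0 <= r < d%:Z ->
  (q * d%:Z + r == N) = ((N %% d%:Z)%Z == r) && (q == (N %/ d%:Z)%Z).
Proof.
move=> /andP [r_ge0 rd]; have d_neq0 : d%:Z != 0 by apply: lt0r_neq0; apply: le_lt_trans rd.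
apply/eqP/andP => [<- | [/eqP <- /eqP ->]]; last by rewrite -divz_eq.
by rewrite modzMDl modz_small ?r_ge0 // divzMDl // divz_small ?r_ge0 // addr0.
Qed.

Section WordOperators.
Variables (R : nzRingType) (s : nat).

Local Notation digit := (digit s).

Lemma digitS x k : digit x k.+1 = digit (x %/ s)%N k.
Proof. by rewrite /digit expnS divnMA. Qed.

Lemma digit0 x : digit x 0 = (x %% s)%N.
Proof. by rewrite /digit expn0 divn1. Qed.

Lemma foldr_digitsS (A : Type) (c : A -> A -> A) (F : nat -> A) (a : A) n x :
  foldr (fun k => c (F (digit x k))) a (iota 0 n.+1) =
  c (F (x %% s)%N) (foldr (fun k => c (F (digit (x %/ s)%N k))) a (iota 0 n)).
Proof.
rewrite /= digit0 -[1%N]/(1 + 0)%N iotaDl foldr_map.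
by congr (c _ (foldr _ _ _)); apply: functional_extensionality => k; rewrite digitS.
Qed.

Lemma uwS n x : @uw R s n.+1 x = @u R s (x %% s)%N \o @uw R s n (x %/ s)%N.
Proof. exact: (@foldr_digitsS (Lvec R -> Lvec R) (fun f g => f \o g) (@u R s) id). Qed.

Lemma uw_adjS n x : @uw_adj R s n.+1 x = @uw_adj R s n (x %/ s)%N \o @u_adj R s (x %% s)%N.
Proof. exact: (@foldr_digitsS (Lvec R -> Lvec R) (fun f g => g \o f) (@u_adj R s) id). Qed.

Lemma SwS n x : @Sw R s n.+1 x = @S R s (x %% s)%N \o @Sw R s n (x %/ s)%N.
Proof. exact: (@foldr_digitsS (Hvec R -> Hvec R) (fun f g => f \o g) (@S R s) id). Qed.

Lemma Sw_adjS n x : @Sw_adj R s n.+1 x = @Sw_adj R s n (x %/ s)%N \o @S_adj R s (x %% s)%N.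
Proof. exact: (@foldr_digitsS (Hvec R -> Hvec R) (fun f g => g \o f) (@S_adj R s) id). Qed.

Definition vcat (n x : nat) (v : nat * nat) : nat * nat := (v.1 + n, s ^ n * v.2 + x)%N.

Lemma uw0 n x : @uw R s n x (fun=> 0) = (fun=> 0).
Proof.
elim: n x => [|n IH] x //; rewrite uwS /= IH.
by apply: functional_extensionality => l; rewrite /u; case: ifP.
Qed.

Lemma Sw0 n x : @Sw R s n x (fun=> 0) = (fun=> 0).
Proof.
elim: n x => [|n IH] x //; rewrite SwS /= IH.
by apply: functional_extensionality => p; rewrite /S; case: ifP.
Qed.

Hypothesis s_gt0 : (0 < s)%N.

Lemma ltn_divn_expnS x n : (x < s ^ n.+1)%N -> (x %/ s < s ^ n)%N.
Proof. by rewrite ltn_divLR // -expnSr. Qed.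

Lemma u_eZ j l : @u R s j (eZ R l) = eZ R (s%:Z * l + j%:Z).
Proof.
apply: functional_extensionality => l'; rewrite /u /eZ.
have s_neq0 : s%:Z != 0 by rewrite eqz_nat -lt0n.
have [->|ne] := eqVneq l' (s%:Z * l + j%:Z).
  by rewrite addrK dvdz_mulr ?dvdzz // (mulKz l s_neq0) eqxx.
case: ifP => // s_dvd; case: ifP => // /eqP l_eq.
by case/eqP: ne; rewrite -[l'](subrK j%:Z) -(divzK s_dvd) l_eq mulrC.
Qed.

Lemma uw_eZ n x l : (x < s ^ n)%N ->
  @uw R s n x (eZ R l) = eZ R ((s ^ n)%N%:Z * l + x%:Z).
Proof.
elim: n x l => [|n IH] x l.
  by rewrite expn0 ltnS leqn0 => /eqP ->; rewrite mul1r addr0.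
move=> x_lt; rewrite uwS /= IH ?ltn_divn_expnS // u_eZ; congr (eZ R _).
by rewrite [in RHS](divn_eq x s) expnS PoszD !PoszM; ring.
Qed.

Lemma uw_adjE m y g q : (y < s ^ m)%N ->
  @uw_adj R s m y g q = g ((s ^ m)%N%:Z * q + y%:Z).
Proof.
elim: m y g q => [|m IH] y g q.
  by rewrite expn0 ltnS leqn0 => /eqP ->; rewrite mul1r addr0.
move=> y_lt; rewrite uw_adjS /= IH ?ltn_divn_expnS // /u_adj; congr g.
by rewrite [in RHS](divn_eq y s) expnS PoszD !PoszM; ring.
Qed.

Lemma uw_adj_eZ_cat m y q : (y < s ^ m)%N ->
  @uw_adj R s m y (eZ R ((s ^ m)%N%:Z * q + y%:Z)) = eZ R q.
Proof.
move=> y_lt; apply: functional_extensionality => q'; rewrite uw_adjE // /eZ.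
have s_neq0 : (s ^ m)%N%:Z != 0 by rewrite eqz_nat -lt0n expn_gt0 s_gt0.
by rewrite (inj_eq (addIr _)) (inj_eq (mulfI s_neq0)).
Qed.

Lemma uw_adj_eZ_eq0 m y l : (y < s ^ m)%N ->
  (forall q, l != (s ^ m)%N%:Z * q + y%:Z) -> @uw_adj R s m y (eZ R l) = (fun=> 0).
Proof.
move=> y_lt l_ne; apply: functional_extensionality => q.
by rewrite uw_adjE // /eZ eq_sym (negbTE (l_ne q)).
Qed.

Lemma S_EH j w : (j < s)%N -> @S R s j (EH R w) = EH R (w.1.+1, s * w.2 + j)%N.
Proof.
move=> j_lt; apply: functional_extensionality => -[[|a] b]; case: w => c d //.
rewrite /S /EH /= !xpair_eqE eqSS mulnC [b == _]eq_sym eqn_divmod // [d == _]eq_sym.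
by case: (b %% s == j)%N; rewrite ?andbF.
Qed.

Lemma Sw_EH n x w : (x < s ^ n)%N -> @Sw R s n x (EH R w) = EH R (vcat n x w).
Proof.
elim: n x w => [|n IH] x w.
  by rewrite expn0 ltnS leqn0 => /eqP ->; rewrite /vcat mul1n !addn0; case: w.
move=> x_lt; rewrite SwS /= IH ?ltn_divn_expnS // S_EH ?ltn_pmod //= /vcat /=.
by rewrite addnS [in RHS](divn_eq x s) expnS; congr (EH R (_, _)); ring.
Qed.

Lemma Sw_adjE m y f p : (y < s ^ m)%N -> @Sw_adj R s m y f p = f (vcat m y p).
Proof.
elim: m y f p => [|m IH] y f p.
  by rewrite expn0 ltnS leqn0 => /eqP ->; rewrite /vcat mul1n !addn0; case: p.
move=> y_lt; rewrite Sw_adjS /= IH ?ltn_divn_expnS // /S_adj /vcat /=.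
by rewrite addnS [in RHS](divn_eq y s) expnS; congr (f (_, _)); ring.
Qed.

Lemma vcat_inj m y : injective (vcat m y).
Proof.
move=> [a b] [c d] [/addIn -> /addIn /eqP].
by rewrite eqn_pmul2l ?expn_gt0 ?s_gt0 // => /eqP ->.
Qed.

Lemma Sw_adj_EH_vcat m y v : (y < s ^ m)%N ->
  @Sw_adj R s m y (EH R (vcat m y v)) = EH R v.
Proof.
move=> y_lt; apply: functional_extensionality => p.
by rewrite Sw_adjE // /EH (inj_eq (@vcat_inj m y)).
Qed.

Lemma Sw_adj_EH_eq0 m y w : (y < s ^ m)%N ->
  (forall v, w != vcat m y v) -> @Sw_adj R s m y (EH R w) = (fun=> 0).
Proof.
move=> y_lt w_ne; apply: functional_extensionality => p.
by rewrite Sw_adjE // /EH eq_sym (negbTE (w_ne p)).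
Qed.

End WordOperators.

Section PhiEncoding.
Variables (s : nat).

Lemma phi_vcat n x v : phi s (vcat s n x v) = (s ^ n)%N%:Z * phi s v + x%:Z.
Proof. by case: v => a b; rewrite /phi /vcat /= expnD PoszD !PoszM PoszD; ring. Qed.

Lemma inV_vcat n x v : (x < s ^ n)%N -> inV s v -> inV s (vcat s n x v).
Proof.
case: v => a b x_lt; rewrite /inV /vcat /= => b_lt.
apply: (@leq_trans (s ^ n * b.+1)); first by rewrite mulnS addnC ltn_add2r.
by rewrite expnD mulnC leq_mul2r b_lt orbT.
Qed.

Lemma iota_adj_eZ_out (R : nzRingType) l :
  ~ (exists v, inV s v /\ phi s v = l) -> iota_adj s (eZ R l) = (fun=> 0).
Proof.
move=> l_out; apply: functional_extensionality => p; rewrite /iota_adj /eZ.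
case: ifP => // p_in; case: eqP => // phi_p.
by case: l_out; exists p.
Qed.

Hypothesis s_gt1 : (1 < s)%N.

Lemma phi_lt_expnS k z : (z < s ^ k)%N -> (s ^ k + z < s ^ k.+1)%N.
Proof. by move=> z_lt; rewrite expnS; nia. Qed.

Lemma trunc_log_phi k z : (z < s ^ k)%N -> trunc_log s (s ^ k + z) = k.
Proof. by move=> z_lt; apply: trunc_log_eq; rewrite // leq_addr phi_lt_expnS. Qed.

Lemma phi_inj : {in inV s &, injective (phi s)}.
Proof.
move=> [a b] [c d]; rewrite /in_mem /inV /= => b_lt d_lt.
move=> /eqP; rewrite eqz_nat /= => /eqP phi_eq.
have a_eq_c : a = c by rewrite -(trunc_log_phi b_lt) phi_eq trunc_log_phi.
by move: phi_eq; rewrite a_eq_c => /addnI ->.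
Qed.

Lemma iota_adj_eZ_phi (R : nzRingType) v :
  inV s v -> iota_adj s (eZ R (phi s v)) = EH R v.
Proof.
move=> v_in; apply: functional_extensionality => p; rewrite /iota_adj /eZ /EH.
case: ifP => p_in; first by rewrite (inj_in_eq phi_inj).
by case: eqP => // p_eq; rewrite p_eq v_in in p_in.
Qed.

Variant prefix_spec (m y : nat) (w : nat * nat) : Prop :=
  | PrefixVcat v of inV s v & w = vcat s m y v
  | PrefixRoot of phi s w = y%:Z
  | PrefixNone of (forall q : int, phi s w != (s ^ m)%N%:Z * q + y%:Z).

Lemma prefixP m y w : (y < s ^ m)%N -> inV s w -> prefix_spec m y w.
Proof.
case: w => k z y_lt; rewrite /inV /= => z_lt.
have sm_gt0 : (0 < s ^ m)%N by rewrite expn_gt0 ltnW.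
have y_range : (0 <= y%:Z < (s ^ m)%N%:Z) by rewrite le0z_nat ltz_nat.
have prefix_none : ((s ^ k + z) %% s ^ m != y)%N -> prefix_spec m y (k, z).
  move=> mod_ny; apply: PrefixNone => q.
  by rewrite /phi /= eq_sym [_ * q]mulrC eqz_divmod // modz_nat eqz_nat (negbTE mod_ny).
have [m_le_k | k_lt_m] := leqP m k.
  have k_eq : k = (k - m + m)%N by rewrite subnK.
  have [z_y | z_ny] := eqVneq (z %% s ^ m)%N y.
    apply: (@PrefixVcat _ _ _ (k - m, z %/ s ^ m)%N).
      by rewrite /inV /= ltn_divLR // -expnD -k_eq.
    by rewrite /vcat /= -k_eq -z_y mulnC -divn_eq.
  by apply: prefix_none; rewrite k_eq expnD modnMDl.
have phi_lt : (s ^ k + z < s ^ m)%N.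
  by apply: leq_trans (phi_lt_expnS z_lt) _; rewrite leq_pexp2l // ltnW.
have [phi_y | phi_ny] := eqVneq (s ^ k + z)%N y.
  by apply: PrefixRoot; rewrite /phi /= phi_y.
by apply: prefix_none; rewrite modn_small.
Qed.

End PhiEncoding.

Section ProductFormula.
Variables (R : nzRingType) (s : nat) (n x m y : nat).
Hypotheses (s_gt1 : (1 < s)%N) (x_lt : (x < s ^ n)%N) (y_lt : (y < s ^ m)%N).

Lemma TS_uw_uw_adj w : inV s w ->
  TS_basis s (@uw R s n x \o @uw_adj R s m y) w =
  (fun p => @Sw R s n x (@Sw_adj R s m y (EH R w)) p
            + (if phi s w == y%:Z then iota_adj s (eZ R x%:Z) p else 0)).
Proof.
have s_gt0 : (0 < s)%N by apply: ltnW.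
have sm_neq0 : (s ^ m)%N%:Z != 0 by rewrite eqz_nat -lt0n expn_gt0 s_gt0.
have cat_neq_y v : (s ^ m)%N%:Z * phi s v + y%:Z != y%:Z.
  by rewrite -subr_eq0 addrK mulf_neq0 // /phi eqz_nat -lt0n addn_gt0 expn_gt0 s_gt0.
move=> w_in; rewrite /TS_basis /=; case: (prefixP s_gt1 y_lt w_in) => [v v_in -> | phi_y | no_q].
- rewrite phi_vcat uw_adj_eZ_cat // uw_eZ // -phi_vcat iota_adj_eZ_phi ?inV_vcat //.
  rewrite Sw_adj_EH_vcat // Sw_EH // (negbTE (cat_neq_y v)).
  by apply: functional_extensionality => p; rewrite addr0.
- have eZ_y : uw_adj s m y (eZ R y%:Z) = eZ R 0.
    by move: (uw_adj_eZ_cat R s_gt0 0 y_lt); rewrite mulr0 add0r.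
  rewrite phi_y eZ_y uw_eZ // mulr0 add0r Sw_adj_EH_eq0 // ?Sw0 ?eqxx.
    by apply: functional_extensionality => p; rewrite add0r.
  by move=> v; apply: contra_neq (cat_neq_y v) => w_eq; rewrite -phi_vcat -w_eq.
- have phi_ny : phi s w != y%:Z by move: (no_q 0); rewrite mulr0 add0r.
  rewrite (negbTE phi_ny) uw_adj_eZ_eq0 // uw0 Sw_adj_EH_eq0 // ?Sw0.
    by apply: functional_extensionality => p; rewrite /iota_adj addr0; case: ifP.
  by move=> v; apply: contra_neq (no_q (phi s v)) => ->; rewrite phi_vcat.
Qed.

End ProductFormula.

Theorem proposition6p4 (R : nzRingType) (s : nat) (hs : (2 <= s)%N)
    (n x m y : nat) (hx : (x < s ^ n)%N) (hy : (y < s ^ m)%N) :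
  (forall j x' l y' : nat,
     inV s (j, x') -> inV s (l, y') ->
     x%:Z = phi s (j, x') -> y%:Z = phi s (l, y') ->
     forall w, inV s w ->
       @TS_basis R s (@uw R s n x \o @uw_adj R s m y) w
       = (fun p => @Sw R s n x (@Sw_adj R s m y (@EH R w)) p
                   + @Crank1 R (j, x') (l, y') (@EH R w) p))
  /\
  ((~ (exists v, inV s v /\ phi s v = x%:Z)
    \/ ~ (exists v, inV s v /\ phi s v = y%:Z)) ->
     forall w, inV s w ->
       @TS_basis R s (@uw R s n x \o @uw_adj R s m y) w
       = @Sw R s n x (@Sw_adj R s m y (@EH R w))).
Proof.
split => [j x' l y' jx_in ly_in x_eq y_eq | x_or_y_out] w w_in;
  rewrite TS_uw_uw_adj //; apply: functional_extensionality => p.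
  rewrite x_eq y_eq iota_adj_eZ_phi // (inj_in_eq (phi_inj hs)) // /Crank1 /EH.
  by rewrite [w == _]eq_sym; case: (p == _); case: (_ == w).
rewrite -[RHS]addr0; congr (_ + _).
case: x_or_y_out => [x_out | y_out]; first by rewrite iota_adj_eZ_out //; case: ifP.
by case: eqP => // phi_w; case: y_out; exists w.
Qed.
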